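(* There exist $(a_1,a_2,a_3,a_4)$ and $(b_1,b_2,b_3,b_4)$ with all $a_j,b_j\in(0,1)$, $\sum_j a_j=\sum_jb_j=1$, and $(b_j)$ not a permutation of $(a_j)$, such that $$\theta(a;0)=\theta(b;0),\quad \theta(a;1)=\theta(b;1),\quad \theta'(a;0)=\theta'(b;0),\quad \theta'(a;1)=\theta'(b;1),$$ where $\theta(x_1,x_2,x_3,x_4;q)=\log(x_1^q+x_2^q+x_3^q+x_4^q)$ and $\theta'$ denotes the derivative with respect to $q$.
   Context: $\theta'(x_1,\dots,x_4;q)=\dfrac{\sum_{i=1}^4x_i^q\log x_i}{\sum_{i=1}^4x_i^q}$. *)

From Stdlib Require Import Reals List Permutation.
Open Scope R_scope.

Definition theta (x1 x2 x3 x4 q : R) : R :=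
  ln (Rpower x1 q + Rpower x2 q + Rpower x3 q + Rpower x4 q).

(* theta'(x;q) = d/dq theta(x;q) = (sum_i x_i^q log x_i) / (sum_i x_i^q),
   as given explicitly in the paper's context. *)
Definition theta' (x1 x2 x3 x4 q : R) : R :=
  (Rpower x1 q * ln x1 + Rpower x2 q * ln x2 + Rpower x3 q * ln x3
     + Rpower x4 q * ln x4)
  / (Rpower x1 q + Rpower x2 q + Rpower x3 q + Rpower x4 q).

From Stdlib Require Import Reals List Permutation Lra.
Open Scope R_scope.

(* At q = 0 and q = 1 the spectral quantities reduce to
   elementary symmetric data of a positive vector x = (x1,..,x4):
     theta(x;0)  = ln 4,            theta(x;1)  = ln (sum x_i),
     theta'(x;0) = ln (prod x_i)/4, theta'(x;1) = (sum x_i ln x_i)/(sum x_i).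
   Hence two positive vectors with the same sum, the same product and the same
   value of  sum x_i ln x_i  agree on all four quantities (theta_data_agree).
   We take a = (5,27,28,70)/130 and b = (6,15,49,60)/130.  Both numerator
   vectors sum to 130 and have product 264600, and
     5^5 27^27 28^28 70^70 = 6^6 15^15 49^49 60^60   (= 2^126 3^81 5^75 7^98),
   which after rescaling by 130 (xlogx_sum_scaled) gives equal values of
   sum x_i ln x_i.  Since 5/130 does not occur in b, b is not a permutation
   of a. *)

Definition xlogx_sum (x1 x2 x3 x4 : R) : R :=
  x1 * ln x1 + x2 * ln x2 + x3 * ln x3 + x4 * ln x4.

Section SpecialValues.

Variables x1 x2 x3 x4 : R.
Hypotheses (Hx1 : 0 < x1) (Hx2 : 0 < x2) (Hx3 : 0 < x3) (Hx4 : 0 < x4).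

Lemma theta_at_0 : theta x1 x2 x3 x4 0 = ln 4.
Proof. unfold theta; rewrite !Rpower_O by assumption; f_equal; lra. Qed.

Lemma theta_at_1 : theta x1 x2 x3 x4 1 = ln (x1 + x2 + x3 + x4).
Proof. unfold theta; rewrite !Rpower_1 by assumption; reflexivity. Qed.

Lemma theta'_at_0 : theta' x1 x2 x3 x4 0 = ln (x1 * x2 * x3 * x4) / 4.
Proof.
  unfold theta'; rewrite !Rpower_O by assumption.
  rewrite !ln_mult by (repeat apply Rmult_lt_0_compat; assumption).
  field.
Qed.

Lemma theta'_at_1 :
  theta' x1 x2 x3 x4 1 = xlogx_sum x1 x2 x3 x4 / (x1 + x2 + x3 + x4).
Proof. unfold theta', xlogx_sum; rewrite !Rpower_1 by assumption; reflexivity. Qed.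

End SpecialValues.

Lemma theta_data_agree (a1 a2 a3 a4 b1 b2 b3 b4 : R) :
  0 < a1 -> 0 < a2 -> 0 < a3 -> 0 < a4 ->
  0 < b1 -> 0 < b2 -> 0 < b3 -> 0 < b4 ->
  a1 + a2 + a3 + a4 = b1 + b2 + b3 + b4 ->
  a1 * a2 * a3 * a4 = b1 * b2 * b3 * b4 ->
  xlogx_sum a1 a2 a3 a4 = xlogx_sum b1 b2 b3 b4 ->
  theta a1 a2 a3 a4 0 = theta b1 b2 b3 b4 0 /\
  theta a1 a2 a3 a4 1 = theta b1 b2 b3 b4 1 /\
  theta' a1 a2 a3 a4 0 = theta' b1 b2 b3 b4 0 /\
  theta' a1 a2 a3 a4 1 = theta' b1 b2 b3 b4 1.
Proof.
  intros Ha1 Ha2 Ha3 Ha4 Hb1 Hb2 Hb3 Hb4 Hsum Hprod Hxlogx.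
  rewrite !theta_at_0, !theta_at_1, !theta'_at_0, !theta'_at_1 by assumption.
  rewrite Hsum, Hprod, Hxlogx; repeat split.
Qed.

Lemma xlogx_sum_scaled (c n1 n2 n3 n4 : R) :
  0 < c -> 0 < n1 -> 0 < n2 -> 0 < n3 -> 0 < n4 ->
  xlogx_sum (n1 / c) (n2 / c) (n3 / c) (n4 / c)
  = (xlogx_sum n1 n2 n3 n4 - (n1 + n2 + n3 + n4) * ln c) / c.
Proof.
  intros Hc H1 H2 H3 H4.
  assert (ln_quot : forall n, 0 < n -> ln (n / c) = ln n - ln c).
  { intros n Hn; unfold Rdiv; rewrite ln_mult, ln_Rinv; try apply Rinv_0_lt_compat; lra. }
  unfold xlogx_sum; rewrite !ln_quot by assumption; field; lra.
Qed.

Lemma mul_ln_as_ln_pow (x : R) (k : nat) :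
  0 < x -> x = INR k -> x * ln x = ln (x ^ k).
Proof. intros Hx Hk; rewrite ln_pow by assumption; rewrite <- Hk; reflexivity. Qed.

Lemma xlogx_sum_numerators :
  xlogx_sum 5 27 28 70 = xlogx_sum 6 15 49 60.
Proof.
  unfold xlogx_sum.
  rewrite (mul_ln_as_ln_pow 5 5), (mul_ln_as_ln_pow 27 27),
    (mul_ln_as_ln_pow 28 28), (mul_ln_as_ln_pow 70 70),
    (mul_ln_as_ln_pow 6 6), (mul_ln_as_ln_pow 15 15),
    (mul_ln_as_ln_pow 49 49), (mul_ln_as_ln_pow 60 60)
    by (lra || (rewrite INR_IZR_INZ; reflexivity)).
  rewrite <- !ln_mult by (repeat apply Rmult_lt_0_compat; try apply pow_lt; lra).
  f_equal; ring.
Qed.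

Theorem theorem10 :
  exists a1 a2 a3 a4 b1 b2 b3 b4 : R,
    (0 < a1 < 1) /\ (0 < a2 < 1) /\ (0 < a3 < 1) /\ (0 < a4 < 1) /\
    (0 < b1 < 1) /\ (0 < b2 < 1) /\ (0 < b3 < 1) /\ (0 < b4 < 1) /\
    a1 + a2 + a3 + a4 = 1 /\ b1 + b2 + b3 + b4 = 1 /\
    ~ Permutation (a1 :: a2 :: a3 :: a4 :: nil) (b1 :: b2 :: b3 :: b4 :: nil) /\
    theta a1 a2 a3 a4 0 = theta b1 b2 b3 b4 0 /\
    theta a1 a2 a3 a4 1 = theta b1 b2 b3 b4 1 /\
    theta' a1 a2 a3 a4 0 = theta' b1 b2 b3 b4 0 /\
    theta' a1 a2 a3 a4 1 = theta' b1 b2 b3 b4 1.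
Proof.
  exists (5/130), (27/130), (28/130), (70/130), (6/130), (15/130), (49/130), (60/130).
  assert (not_perm : ~ Permutation (5/130 :: 27/130 :: 28/130 :: 70/130 :: nil)
                                   (6/130 :: 15/130 :: 49/130 :: 60/130 :: nil)).
  { intro Hperm.
    assert (Hin : In (5/130) (6/130 :: 15/130 :: 49/130 :: 60/130 :: nil))
      by (eapply Permutation_in; [exact Hperm | left; reflexivity]).
    simpl in Hin; lra. }
  assert (same_xlogx : xlogx_sum (5/130) (27/130) (28/130) (70/130)
                       = xlogx_sum (6/130) (15/130) (49/130) (60/130)).
  { rewrite !xlogx_sum_scaled, xlogx_sum_numerators by lra; f_equal; f_equal; lra. }
  destruct (theta_data_agree (5/130) (27/130) (28/130) (70/130)
              (6/130) (15/130) (49/130) (60/130))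
    as (agree0 & agree1 & agree0' & agree1'); [lra .. | exact same_xlogx |].
  repeat split; assumption || lra.
Qed.
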